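(* Let $H$ be a connected graph on vertex set $\{1,\dots,r\}$ and, for each $i\in\{1,\dots,r\}$, let $G_i$ be a $d_i$-regular graph of order $n_i$ with adjacency eigenvalues $d_i=\lambda_1(A(G_i)),\lambda_2(A(G_i)),\dots,\lambda_{n_i}(A(G_i))$. Let $G=\bigvee_H\{G_i:1\le i\le r\}$ and $N_i=\sum_{j\in N_H(i)}n_j$. For $s\in\mathbb{R}$, let $M_i(s)=(s^2(d_i+N_i-1)+1)I_{n_i}-sA(G_i)$, so that $\sigma(M_i(s))=\{s^2(d_i+N_i-1)-s\lambda_k(A(G_i))+1\}_{k=1}^{n_i}$, and $\lambda_1(M_i(s))=s^2(d_i+N_i-1)-sd_i+1$. Let $F_r(s)$ be the $r\times r$ symmetric matrix with diagonal entries $(F_r(s))_{ii}=\lambda_1(M_i(s))$ and off-diagonal entries $(F_r(s))_{ij}=\delta_{ij}\sqrt{n_in_j}$, where $\delta_{ij}=-s$ if $ij\in E(H)$ and $\delta_{ij}=0$ otherwise. Then, as multisets, $$\sigma(M_G(s))=\bigcup_{i=1}^r\big(\sigma(M_i(s))-\{\lambda_1(M_i(s))\}\big)\cup\sigma(F_r(s)),$$ where $\sigma(M_i(s))-\{\lambda_1(M_i(s))\}$ denotes the multiset $\{s^2(d_i+N_i-1)-s\lambda_k(A(G_i))+1\}_{k=2}^{n_i}$.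
   Context: For a simple undirected graph $G$ on $n$ vertices with adjacency matrix $A$, diagonal degree matrix $D$ and identity $I$, and real $s$, the deformed Laplacian matrix is $M_G(s)=I-sA+s^2(D-I)$; $\sigma(\cdot)$ is the multiset of eigenvalues. $H$-join: given a graph $H$ on vertex set $\{1,\dots,r\}$ and pairwise vertex-disjoint graphs $G_1,\dots,G_r$, the graph $G=\bigvee_H\{G_i:1\le i\le r\}$ has vertex set $\bigcup_i V(G_i)$ and edge set $\bigcup_iE(G_i)\cup\bigcup_{ij\in E(H)}\{uv:u\in V(G_i),v\in V(G_j)\}$. $N_H(i)$ is the set of neighbours of $i$ in $H$. *)

From HB Require Import structures.
From mathcomp Require Import all_boot all_order all_algebra.
Set Implicit Arguments. Unset Strict Implicit. Unset Printing Implicit Defensive.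
Import Order.TTheory GRing.Theory Num.Theory.
Local Open Scope ring_scope.

(* Matrices indexed by the vertices use the
   canonical enumeration of T (any labelling gives similar matrices). *)
Definition simple_graph (T : finType) (e : rel T) : Prop :=
  symmetric e /\ irreflexive e.

Definition adjmx (R : nzRingType) (T : finType) (e : rel T) : 'M[R]_#|T| :=
  \matrix_(i, j) (e (enum_val i) (enum_val j))%:R.

Definition deg (T : finType) (e : rel T) (x : T) : nat := #|[pred y | e x y]|.

Definition degmx (R : nzRingType) (T : finType) (e : rel T) : 'M[R]_#|T| :=
  \matrix_(i, j) ((i == j)%:R * (deg e (enum_val i))%:R).

Definition deformed_lap (R : comNzRingType) (T : finType) (e : rel T) (s : R)
  : 'M[R]_#|T| :=
  1%:M - s *: adjmx R e + s ^+ 2 *: (degmx R e - 1%:M).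

Definition regular (T : finType) (e : rel T) (d : nat) : Prop :=
  forall x, deg e x = d.

Definition hjoin (r : nat) (n : 'I_r -> nat) (H : rel 'I_r)
  (eG : forall i : 'I_r, rel 'I_(n i)) : rel {i : 'I_r & 'I_(n i)} :=
  fun u v =>
    ((tag u == tag v) && eG (tag u) (tagged u) (tagged_as u v))
    || H (tag u) (tag v).

Definition connected (T : finType) (e : rel T) : Prop :=
  (0 < #|T|)%N /\ forall x y, connect e x y.

(* "s is the multiset of eigenvalues of M" (with algebraic multiplicity) *)
Definition is_spectrum (R : comNzRingType) (m : nat) (M : 'M[R]_m) (s : seq R)
  : Prop := char_poly M = \prod_(x <- s) ('X - x%:P).

From HB Require Import structures.
From mathcomp Require Import all_boot all_order all_algebra.
From mathcomp Require Import perm ring.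
Set Implicit Arguments.
Unset Strict Implicit.
Unset Printing Implicit Defensive.
Import Order.TTheory GRing.Theory Num.Theory.
Local Open Scope ring_scope.

(* List the vertices of the H-join with one representative of every block G_i
   first.  The characteristic matrix of the block partition is then col_mx 1 E,
   and since every vertex of G_i has the same total weight Q i j into block j,
   A (col_mx 1 E) = (col_mx 1 E) Q.  Conjugating A by block_mx 1 0 E 1 makes it
   block upper triangular, with diagonal blocks Q and a block-diagonal matrix
   whose i-th block is the deflation of c_i I - s A(G_i) along the all-ones
   vector, where c_i = 1 + s^2 (d_i + N_i - 1).  The same argument applied to the one-block partition of G_i shows
   that this deflation has the spectrum of c_i I - s A(G_i) with the eigenvalue
   c_i - s d_i removed.  Finally Q is similar to F via diag (sqrt n_i). *)

Lemma char_poly_conj (R : comNzRingType) n (P P' A : 'M[R]_n) :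
  P' *m P = 1%:M -> char_poly (P *m A *m P') = char_poly A.
Proof.
move=> P'P; have PP' := mulmx1C P'P; rewrite /char_poly.
have -> : char_poly_mx (P *m A *m P') =
    map_mx polyC P *m char_poly_mx A *m map_mx polyC P'.
  rewrite /char_poly_mx mulmxBr mulmxBl !map_mxM; congr (_ - _).
  by rewrite mul_mx_scalar -scalemxAl -map_mxM PP' map_mx1 scalemx1.
by rewrite !det_mulmx mulrAC -det_mulmx -map_mxM PP' map_mx1 det1 mul1r.
Qed.

Lemma char_poly_diag_conj (F : fieldType) n (A : 'M[F]_n) (w : 'I_n -> F) :
  (forall i, w i != 0) ->
  char_poly (\matrix_(i, j) (w i * A i j / w j)) = char_poly A.
Proof.
move=> w_neq0; rewrite -[RHS](@char_poly_conj _ _ (diag_mx (\row_i w i))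
  (diag_mx (\row_i (w i)^-1)) A); last first.
  by apply/matrixP => i j; rewrite mul_diag_mx !mxE; case: eqP => [->|];
    rewrite ?mulr1n ?mulr0n ?mulr0 ?mulVf.
congr (char_poly _); apply/matrixP => i j.
by rewrite mul_mx_diag mul_diag_mx !mxE.
Qed.

Lemma char_poly_castmx (R : comNzRingType) m n (e : m = n) (A : 'M[R]_m) :
  char_poly (castmx (e, e) A) = char_poly A.
Proof. by case: n / e; rewrite castmx_id. Qed.

Lemma char_poly_ublock (R : comNzRingType) p q (A : 'M[R]_p) B (C : 'M[R]_q) :
  char_poly (block_mx A B 0 C) = char_poly A * char_poly C.
Proof.
rewrite /char_poly /char_poly_mx map_block_mx (scalar_mx_block p q).
by rewrite opp_block_mx add_block_mx map_mx0 oppr0 addr0 det_ublock.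
Qed.

Lemma char_poly_mxdiag (R : comNzRingType) r (p : 'I_r -> nat)
    (B : forall i, 'M[R]_(p i)) :
  char_poly (mxdiag B) = \prod_i char_poly (B i).
Proof.
elim: r p B => [|r IHr] p B; last first.
  by rewrite mxdiag_recl char_poly_castmx char_poly_ublock IHr big_ord_recl.
rewrite [RHS]big_ord0; move: (mxdiag B); rewrite big_ord0 => A.
by rewrite /char_poly det_mx00.
Qed.

Lemma char_poly_equitable (R : comNzRingType) p q (A : 'M[R]_(p + q))
    (E : 'M[R]_(q, p)) (Q : 'M[R]_p) :
  A *m col_mx 1%:M E = col_mx 1%:M E *m Q ->
  char_poly A = char_poly Q * char_poly (drsubmx A - E *m ursubmx A).
Proof.
rewrite -[A in LHS]submxK mul_block_col mul_col_mx mul1mx !mulmx1.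
case/eq_col_mx => <- AE.
pose S := block_mx 1%:M 0 E 1%:M : 'M[R]_(p + q).
pose S' := block_mx 1%:M 0 (- E) 1%:M : 'M[R]_(p + q).
have SS' : S *m S' = 1%:M.
  rewrite mulmx_block !mul1mx !mulmx0 !mul0mx !addr0 add0r mulmx1 addrN.
  by rewrite -scalar_mx_block.
rewrite -(char_poly_conj A SS') -[A in S' *m A]submxK /S /S'.
rewrite !mulmx_block !mul1mx !mulmx0 !mul0mx !mulmx1 !addr0 !add0r.
rewrite mulmxDl !mulNmx -mulmxA addrACA -opprD -mulmxDr -AE addNr.
by rewrite char_poly_ublock [- _ + _]addrC.
Qed.

Lemma char_poly_scalar_subZ (F : fieldType) n (A : 'M[F]_n) (xs : seq F)
    (a s : F) :
  char_poly A = \prod_(x <- xs) ('X - x%:P) ->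
  char_poly (a%:M - s *: A) = \prod_(x <- xs) ('X - (a - s * x)%:P).
Proof.
move=> charA; have size_xs : size xs = n.
  by have := size_char_poly A; rewrite charA size_prod_XsubC => -[].
have prod_const (c : {poly F}) : \prod_(x <- xs) c = c ^+ n.
  by rewrite big_const_seq count_predT iter_mulr_1 size_xs.
have [-> | s_neq0] := eqVneq s 0.
  rewrite scale0r subr0 char_poly_trig ?scalar_mx_is_trig //.
  under [LHS]eq_bigr => i _ do rewrite mxE eqxx mulr1n.
  under [RHS]eq_bigr do rewrite mul0r subr0.
  by rewrite prodr_const card_ord prod_const.
(* For s != 0, composing with q = a - s X is injective and turns both sides
   into (-s)^n char_poly A. *)
pose q := a%:P - s *: 'X.
have size_q : size q = 2.
  rewrite /q addrC size_polyDl size_polyN size_scale // size_polyX //.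
  exact: leq_ltn_trans (size_polyC_leq1 a) _.
apply/eqP; rewrite -subr_eq0 -(comp_poly2_eq0 _ size_q) comp_polyB subr_eq0.
apply/eqP; transitivity ((- s) ^+ n *: char_poly A).
  rewrite /char_poly -mul_polyC rmorphXn -detZ -det_map_mx.
  congr (\det _); apply/matrixP => i j; rewrite !mxE rmorphB /= comp_polyC.
  case: (i == j); rewrite ?mulr1n ?mulr0n ?comp_polyX ?polyCB ?polyCN ?polyCM;
    rewrite /q -?mul_polyC; ring.
rewrite charA rmorph_prod -mul_polyC rmorphXn -prod_const -big_split /=.
apply: eq_bigr => x _; rewrite rmorphB /= comp_polyX comp_polyC /q.
by rewrite polyCB polyCN polyCM -mul_polyC; ring.
Qed.

Definition fun_mx (R : Type) (T : finType) (f : T -> T -> R) : 'M[R]_#|T| :=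
  \matrix_(i, j) f (enum_val i) (enum_val j).

Lemma char_poly_reindex (R : comNzRingType) (T : finType) (f : T -> T -> R) m
    (g : 'I_m -> T) :
  bijective g ->
  char_poly (\matrix_(a, b) f (g a) (g b)) = char_poly (fun_mx f).
Proof.
move=> g_bij; have card_T : #|T| = m by rewrite -(bij_eq_card g_bij) card_ord.
subst m; have g_inj : injective (enum_rank \o g).
  exact: inj_comp enum_rank_inj (bij_inj g_bij).
pose p := perm g_inj.
rewrite -[RHS](@char_poly_conj _ _ (perm_mx p) (perm_mx p^-1)); last first.
  by rewrite -perm_mxM mulVg perm_mx1.
rewrite -row_permE -col_permE; congr (char_poly _).
by apply/matrixP => a b; rewrite !mxE !permE /= !enum_rankK.
Qed.

Lemma sum_delta_mul (R : pzSemiRingType) (I : finType) (i0 : I) (F : I -> R) :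
  \sum_i (i0 == i)%:R * F i = F i0.
Proof.
rewrite (bigD1 i0) //= eqxx mul1r big1 ?addr0 // => i.
by rewrite eq_sym => /negbTE ->; rewrite mul0r.
Qed.

Lemma sum_tag (V : nmodType) (I : finType) (J : I -> finType)
    (G : {i : I & J i} -> V) (i : I) :
  \sum_(t | tag t == i) G t = \sum_(b : J i) G (Tagged J b).
Proof.
transitivity (\sum_(j | j == i) \sum_(b : J j) G (Tagged J b)); last first.
  by rewrite big_pred1_eq.
rewrite (sig_big_dep (fun j => j == i) (fun _ _ => true)
  (fun j (b : J j) => G (Tagged J b))).
by apply: eq_big => [[j b]|[j b] _] //=; rewrite andbT.
Qed.

Lemma sum_sigma (V : nmodType) (I : finType) (J : I -> finType)
    (G : {i : I & J i} -> V) :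
  \sum_t G t = \sum_i \sum_(b : J i) G (Tagged J b).
Proof.
rewrite (sig_big_dep xpredT (fun _ _ => true)
  (fun i (b : J i) => G (Tagged J b))).
by apply: eq_big => [[]|[]].
Qed.

Lemma deg_sum (R : pzSemiRingType) (T : finType) (e : rel T) x :
  (deg e x)%:R = \sum_y (e x y)%:R :> R.
Proof.
rewrite /deg -sum1_card natr_sum big_mkcond /=.
by apply: eq_bigr => y _; rewrite inE; case: (e x y).
Qed.

Fact ord_next_subproof n (k : 'I_n.-1) : (k.+1 < n)%N.
Proof. by rewrite -ltn_predRL. Qed.

Definition ord_first n (n_gt0 : (0 < n)%N) : 'I_n := Ordinal n_gt0.
Definition ord_next n (k : 'I_n.-1) : 'I_n := Ordinal (ord_next_subproof k).

Definition deflate_mx (R : zmodType) n (n_gt0 : (0 < n)%N)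
    (f : 'I_n -> 'I_n -> R) : 'M[R]_n.-1 :=
  \matrix_(a, b)
    (f (ord_next a) (ord_next b) - f (ord_first n_gt0) (ord_next b)).

Lemma char_poly_deflate (R : comNzRingType) n (n_gt0 : (0 < n)%N)
    (f : 'I_n -> 'I_n -> R) (rho : R) :
  (forall a, \sum_b f a b = rho) ->
  char_poly (fun_mx f) = ('X - rho%:P) * char_poly (deflate_mx n_gt0 f).
Proof.
move=> row_sum; have n_split : (1 + n.-1)%N = n := prednK n_gt0.
pose g := cast_ord n_split.
have g_bij : bijective g.
  by exists (cast_ord (esym n_split)); [exact: cast_ordK | exact: cast_ordKV].
have g_first j : g (lshift _ j) = ord_first n_gt0.
  by apply: val_inj; rewrite /= (ord1 j).
have g_next k : g (rshift 1 k) = ord_next k by apply: val_inj.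
have ones : col_mx 1%:M (const_mx 1) = const_mx 1 :> 'M[R]_(1 + n.-1, 1).
  apply/matrixP => a j; rewrite !mxE.
  by case: split => b; rewrite !mxE ?ord1 ?eqxx.
rewrite -(char_poly_reindex f g_bij).
rewrite (char_poly_equitable (E := const_mx 1) (Q := rho%:M)).
  congr (_ * _); first by rewrite /char_poly det_mx11 !mxE !mulr1n.
  congr (char_poly _); apply/matrixP => a b.
  by rewrite !mxE big_ord1 !mxE !g_next g_first mul1r.
rewrite ones mul_mx_scalar; apply/matrixP => a j; rewrite !mxE.
under eq_bigr do rewrite !mxE mulr1.
by rewrite mulr1 -(row_sum (g a)) (reindex g) //; exact: onW_bij.
Qed.

Lemma char_poly_deflate_regular (F : fieldType) m (m_gt0 : (0 < m)%N)
    (e : rel 'I_m) (k : nat) (xs : seq F) (c s : F) :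
  regular e k -> is_spectrum (adjmx F e) (k%:R :: xs) ->
  char_poly (deflate_mx m_gt0 (fun a b => (a == b)%:R * c - s * (e a b)%:R)) =
  \prod_(x <- xs) ('X - (c - s * x)%:P).
Proof.
move=> e_reg e_spec.
have row_sum a : \sum_b ((a == b)%:R * c - s * (e a b)%:R) = c - s * k%:R.
  by rewrite sumrB sum_delta_mul -mulr_sumr -deg_sum e_reg.
have := char_poly_deflate m_gt0 row_sum.
have -> : fun_mx (fun a b => (a == b)%:R * c - s * (e a b)%:R) =
          c%:M - s *: adjmx F e.
  by apply/matrixP => a b; rewrite !mxE (inj_eq enum_val_inj) mulr_natl.
rewrite (char_poly_scalar_subZ _ _ e_spec) big_cons => /mulfI -> //.
by rewrite polyXsubC_eq0.
Qed.

Lemma mxdiag_tagnat (V : nmodType) r (p : 'I_r -> nat)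
    (c : {i : 'I_r & 'I_(p i)} -> {i : 'I_r & 'I_(p i)} -> V) :
  mxdiag (fun i => \matrix_(a, b) c (Tagged _ a) (Tagged _ b)) =
  \matrix_(x, y) (if tagnat.sig1 x == tagnat.sig1 y
                  then c (tagnat.sig x) (tagnat.sig y) else 0).
Proof.
apply/matrixP => x y; rewrite /mxdiag /mxblock !mxE.
rewrite (tagnat.sigE12 x) (tagnat.sigE12 y).
move: (tagnat.sig2 x) (tagnat.sig2 y); move: (tagnat.sig1 x) (tagnat.sig1 y).
move=> i j a b; case: eqP => [e|_]; last by rewrite mxE.
by subst j; rewrite conform_mx_id mxE.
Qed.

Lemma tagged_ord_inj r (p : 'I_r -> nat) (t1 t2 : {i : 'I_r & 'I_(p i)}) :
  tag t1 = tag t2 -> tagged t1 = tagged t2 :> nat -> t1 = t2.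
Proof. by case: t1 t2 => i x [j y] /= e; subst j => /val_inj ->. Qed.

Section EquitableBlocks.

Variables (R : comNzRingType) (r : nat) (n : 'I_r -> nat).
Hypothesis n_gt0 : forall i, (0 < n i)%N.

Local Notation V := {i : 'I_r & 'I_(n i)}.
Local Notation tail_size := (\sum_i (n i).-1)%N.
Local Notation tail_sig := (@tagnat.sig r (fun i => (n i).-1)).

Definition enum_reps_first (a : 'I_(r + tail_size)) : V :=
  match split a with
  | inl i => Tagged _ (ord_first (n_gt0 i))
  | inr k => Tagged _ (ord_next (tagged (tail_sig k)))
  end.

Lemma enum_reps_first_lshift i :
  enum_reps_first (lshift _ i) = Tagged _ (ord_first (n_gt0 i)).
Proof. by rewrite /enum_reps_first (unsplitK (inl _ i)). Qed.

Lemma enum_reps_first_rshift k :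
  enum_reps_first (rshift _ k) = Tagged _ (ord_next (tagged (tail_sig k))).
Proof. by rewrite /enum_reps_first (unsplitK (inr _ k)). Qed.

Lemma enum_reps_first_bij : bijective enum_reps_first.
Proof.
apply: inj_card_bij; last first.
  rewrite card_ord tagnat.card; apply: eq_leq.
  rewrite -[X in (X + _)%N]card_ord -sum1_card -big_split /=.
  by apply: eq_bigr => i _; rewrite add1n prednK.
move=> a b; rewrite /enum_reps_first; pose pos (t : V) := nat_of_ord (tagged t).
case: (splitP a) => [i ei|k ek]; case: (splitP b) => [j ej|l el] e;
  have /= pos_e := congr1 pos e; apply: ord_inj; rewrite ?ei ?ej ?ek ?el //.
  by have /= -> := congr1 tag e.
congr (_ + _)%N; congr nat_of_ord; apply: tagnat.sig_inj.
by apply: tagged_ord_inj; [exact: (congr1 tag e) | case: pos_e].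
Qed.

Variables (L : V -> V -> R) (Q : 'I_r -> 'I_r -> R).
Hypothesis L_block_sum :
  forall u j, \sum_(b : 'I_(n j)) L u (Tagged _ b) = Q (tag u) j.
Hypothesis L_offdiag :
  forall u u' v, tag u = tag u' -> tag u != tag v -> L u v = L u' v.

Theorem char_poly_equitable_blocks :
  char_poly (fun_mx L) = char_poly (\matrix_(i, j) Q i j) *
    \prod_i char_poly (deflate_mx (n_gt0 i)
                         (fun a b => L (Tagged _ a) (Tagged _ b))).
Proof.
pose g := enum_reps_first; rewrite -(char_poly_reindex L enum_reps_first_bij).
set q := tail_size in g *; set A := \matrix_(a, b) L (g a) (g b).
pose P := \matrix_(b, i) (tag (g b) == i)%:R : 'M[R]_(r + q, r).
have P_col : P = col_mx 1%:M (dsubmx P).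
  rewrite -[P in LHS]vsubmxK; congr col_mx; apply/matrixP => i j.
  by rewrite !mxE /g enum_reps_first_lshift.
have block_sum u i : \sum_b L u (g b) * (tag (g b) == i)%:R = Q (tag u) i.
  rewrite -L_block_sum -(sum_tag (L u)) [RHS]big_mkcond [RHS](reindex g) /=.
    by apply: eq_bigr => b _; rewrite mulr_natr mulrb.
  exact: onW_bij enum_reps_first_bij.
have AP : A *m col_mx 1%:M (dsubmx P) =
          col_mx 1%:M (dsubmx P) *m \matrix_(i, j) Q i j.
  rewrite -P_col; apply/matrixP => a i; rewrite !mxE.
  under eq_bigr do rewrite !mxE.
  under [RHS]eq_bigr do rewrite !mxE.
  by rewrite block_sum sum_delta_mul.
pose c (t1 t2 : {i : 'I_r & 'I_((n i).-1)}) :=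
  L (Tagged _ (ord_next (tagged t1))) (Tagged _ (ord_next (tagged t2))) -
  L (Tagged _ (ord_first (n_gt0 (tag t1)))) (Tagged _ (ord_next (tagged t2))).
rewrite (char_poly_equitable AP) -char_poly_mxdiag (mxdiag_tagnat c).
congr (_ * char_poly _); apply/matrixP => x y; rewrite !mxE.
under eq_bigr do rewrite !mxE.
rewrite sum_delta_mul /g !enum_reps_first_rshift enum_reps_first_lshift.
case: eqP => // /eqP tag_neq.
by rewrite (@L_offdiag _ (Tagged _ (ord_first (n_gt0 (tag (tail_sig x))))))
  ?subrr.
Qed.

End EquitableBlocks.

Section HJoinDegree.

Variables (r : nat) (H : rel 'I_r) (n : 'I_r -> nat).
Variable eG : forall i, rel 'I_(n i).
Hypothesis H_irr : irreflexive H.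
Arguments eG : clear implicits.

Lemma hjoin_tagged i (a b : 'I_(n i)) :
  hjoin H eG (Tagged _ a) (Tagged _ b) = eG i a b.
Proof. by rewrite /hjoin /= eqxx tagged_asE H_irr orbF. Qed.

Lemma hjoin_tag_neq u v : tag u != tag v -> hjoin H eG u v = H (tag u) (tag v).
Proof. by rewrite /hjoin => /negbTE ->. Qed.

Lemma deg_hjoin i (a : 'I_(n i)) :
  deg (hjoin H eG) (Tagged _ a) = (deg (eG i) a + \sum_(j < r | H i j) n j)%N.
Proof.
rewrite -[LHS]natn deg_sum sum_sigma (bigD1 i) //=.
under eq_bigr do rewrite hjoin_tagged.
rewrite -deg_sum natn; congr (_ + _)%N.
rewrite [RHS]big_mkcond [RHS](bigD1 i) //= H_irr add0n.
apply: eq_bigr => j j_neq_i.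
under eq_bigr do rewrite hjoin_tag_neq 1?eq_sym //=.
rewrite sumr_const card_ord.
by case: (H i j); rewrite ?mulr1n ?natn ?mulr0n ?mul0rn.
Qed.

End HJoinDegree.

Definition deformed_lap_entry (R : nzRingType) (T : finType) (e : rel T) (s : R)
    (u v : T) : R :=
  (u == v)%:R * (1 + s ^+ 2 * ((deg e u)%:R - 1)) - s * (e u v)%:R.

Lemma deformed_lapE (R : comNzRingType) (T : finType) (e : rel T) (s : R) :
  deformed_lap e s = fun_mx (deformed_lap_entry e s).
Proof.
apply/matrixP => a b; rewrite !mxE /deformed_lap_entry (inj_eq enum_val_inj).
by case: (a == b); rewrite ?mulr1n ?mulr0n; ring.
Qed.

Section HJoinLaplacian.

Variables (R : comNzRingType) (r : nat) (H : rel 'I_r) (n d : 'I_r -> nat).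
Variables (eG : forall i, rel 'I_(n i)) (s : R).
Arguments eG : clear implicits.
Hypotheses (H_irr : irreflexive H) (eG_reg : forall i, regular (eG i) (d i)).

Local Notation L := (deformed_lap_entry (hjoin H eG) s).
Let c i : R := 1 + s ^+ 2 * ((d i + \sum_(j < r | H i j) n j)%:R - 1).
Let Q i j : R :=
  if i == j then c i - s * (d i)%:R else - s * (H i j)%:R * (n j)%:R.

Lemma lap_hjoin_tagged i (a b : 'I_(n i)) :
  L (Tagged _ a) (Tagged _ b) = (a == b)%:R * c i - s * (eG i a b)%:R.
Proof.
by rewrite /deformed_lap_entry eq_Tagged deg_hjoin // eG_reg hjoin_tagged.
Qed.

Lemma lap_hjoin_tag_neq u v :
  tag u != tag v -> L u v = - s * (H (tag u) (tag v))%:R.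
Proof.
move=> tag_neq; rewrite /deformed_lap_entry hjoin_tag_neq //.
have -> : (u == v) = false by apply: contraNF tag_neq => /eqP ->.
by rewrite mul0r sub0r mulNr.
Qed.

Lemma lap_hjoin_block_sum u j :
  \sum_(b : 'I_(n j)) L u (Tagged _ b) = Q (tag u) j.
Proof.
case: u => i a; rewrite /Q /=; case: eqP => [<- | /eqP tag_neq].
  under eq_bigr do rewrite lap_hjoin_tagged.
  by rewrite sumrB sum_delta_mul -mulr_sumr -deg_sum eG_reg.
under eq_bigr do rewrite lap_hjoin_tag_neq //=.
by rewrite sumr_const card_ord [RHS]mulr_natr.
Qed.

Lemma char_poly_lap_hjoin (n_gt0 : forall i, (0 < n i)%N) :
  char_poly (deformed_lap (hjoin H eG) s) =
  char_poly (\matrix_(i, j) Q i j) *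
    \prod_i char_poly (deflate_mx (n_gt0 i)
                         (fun a b => (a == b)%:R * c i - s * (eG i a b)%:R)).
Proof.
rewrite deformed_lapE (char_poly_equitable_blocks n_gt0 lap_hjoin_block_sum).
  congr (_ * _); apply: eq_bigr => i _; congr (char_poly _).
  by apply/matrixP => a b; rewrite !mxE !lap_hjoin_tagged.
by move=> u u' v tag_eq tag_neq; rewrite !lap_hjoin_tag_neq -?tag_eq.
Qed.

End HJoinLaplacian.

Lemma char_poly_symmetrize (R : rcfType) r (n : 'I_r -> nat) (a : 'I_r -> R)
    (b : 'I_r -> 'I_r -> R) :
  (forall i, (0 < n i)%N) ->
  char_poly (\matrix_(i, j) if i == j then a i else b i j * (n j)%:R) =
  char_poly (\matrix_(i, j)
    if i == j then a i else b i j * Num.sqrt (n i * n j)%:R).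
Proof.
move=> n_gt0; pose w i := Num.sqrt (n i)%:R : R.
have w_neq0 i : w i != 0 by rewrite sqrtr_eq0 -ltNge ltr0n.
rewrite -(char_poly_diag_conj _ w_neq0); congr (char_poly _).
apply/matrixP => i j; rewrite !mxE; case: eqP => [<-|_].
  by rewrite mulrAC divff ?mul1r.
rewrite natrM sqrtrM ?ler0n // -/(w i) -/(w j).
by rewrite -[(n j)%:R](sqr_sqrtr (ler0n _ _)) -/(w j); field.
Qed.

Theorem theorem6p4 (R : rcfType) (r : nat) (H : rel 'I_r)
  (n d : 'I_r -> nat) (eG : forall i : 'I_r, rel 'I_(n i))
  (lam : forall i : 'I_r, seq R) (s : R) :
  simple_graph H -> connected H ->
  (forall i, simple_graph (eG i)) ->
  (forall i, 0 < n i)%N ->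
  (forall i, regular (eG i) (d i)) ->
  (* lam i = [:: λ_1; ...; λ_{n_i}] lists the adjacency eigenvalues of G_i,
     with λ_1 = d_i *)
  (forall i, is_spectrum (adjmx R (eG i)) (lam i)) ->
  (forall i, lam i = (d i)%:R :: behead (lam i)) ->
  let N i := (\sum_(j < r | H i j) n j)%N in
  let mu i (x : R) := s ^+ 2 * ((d i + N i)%:R - 1) - s * x + 1 in
  let F : 'M[R]_r := \matrix_(i, j)
      if i == j then mu i (d i)%:R
      else (if H i j then - s else 0) * Num.sqrt ((n i * n j)%:R) in
  forall sF : seq R, is_spectrum F sF ->
  is_spectrum (deformed_lap (hjoin H eG) s)
    (flatten [seq [seq mu i x | x <- behead (lam i)] | i <- enum 'I_r] ++ sF).
Proof.
move=> [_ H_irr] _ _ n_gt0 eG_reg eG_spec lam_head N mu F sF F_spec.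
rewrite /is_spectrum (char_poly_lap_hjoin s H_irr eG_reg n_gt0).
rewrite char_poly_symmetrize //.
rewrite big_cat /= mulrC -F_spec; congr (_ * _); last first.
  rewrite /F; congr (char_poly _).
  apply/matrixP => i j; rewrite !mxE /mu; case: eqP => _; first by ring.
  by case: (H i j); rewrite ?mulr1 ?mulr0.
rewrite big_flatten big_map big_enum /=; apply: eq_bigr => i _; rewrite big_map.
have := eG_spec i; rewrite lam_head.
move=> /(char_poly_deflate_regular (n_gt0 i) _ _ (eG_reg i)) ->.
by apply: eq_bigr => x _; rewrite /mu; congr ('X - _%:P); ring.
Qed.
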